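(* Let $\zeta\in(0,\infty)$ and let $d\in\mathbf{MT}([0,\zeta])$; let $(T,d,r,\mu)$ be the induced pointed measured compact real tree and $p:[0,\zeta]\to T$ the canonical projection. Let $$U=\{s\in(0,\zeta):\ \forall s'\in[0,\zeta]\setminus\{s\},\ d(0,s)+d(s,s')>d(0,s')\}.$$ If $[0,\zeta]\setminus U$ is Lebesgue-negligible, then $(T,d,r,\mu)$ is a continuum real tree.
   Context: $\mathbf{MT}([0,\zeta])$: continuous pseudo-metrics $d$ on $[0,\zeta]$ satisfying the four points inequality $d(s_1,s_2)+d(s_3,s_4)\le\max(d(s_1,s_3)+d(s_2,s_4),d(s_1,s_4)+d(s_2,s_3))$. The induced space: $T=[0,\zeta]/\{d=0\}$ with induced metric (a compact real tree), $r=p(0)$, $\mu$ the image of Lebesgue measure on $[0,\zeta]$ under $p$. A continuum real tree is a compact real tree $(T,d,r,\mu)$ with $\mu$ a finite diffuse Borel measure with topological support $T$ and $\mu(T\setminus\mathtt{Lf}(T))=0$, where $\mathtt{Lf}(T)$ is the set of points $\sigma\ne r$ such that $T\setminus\{\sigma\}$ is connected (degree $1$). *)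

From HB Require Import structures.
From mathcomp Require Import all_boot all_order all_algebra.
From mathcomp Require Import all_classical all_reals all_analysis.
Set Implicit Arguments. Unset Strict Implicit. Unset Printing Implicit Defensive.
Import Order.TTheory GRing.Theory Num.Theory.
Local Open Scope classical_set_scope.
Local Open Scope ring_scope.

Section MetricNotions.
Variables (R : realType) (X : Type) (dist : X -> X -> R).

Definition is_metric : Prop :=
  [/\ (forall x y, 0 <= dist x y),
      (forall x y, dist x y = 0 <-> x = y),
      (forall x y, dist x y = dist y x) &
      (forall x y z, dist x z <= dist x y + dist y z)].

Definition mball (x : X) (e : R) : set X := [set y | dist x y < e].

Definition mopen (A : set X) : Prop :=
  forall x, A x -> exists2 e : R, 0 < e & mball x e `<=` A.

Definition mcompact (A : set X) : Prop :=
  forall (I : Type) (U : I -> set X), (forall i, mopen (U i)) ->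
    A `<=` \bigcup_i U i ->
    exists (n : nat) (j : nat -> I),
      A `<=` [set x | exists2 k : nat, (k < n)%N & U (j k) x].

Definition mconnected (A : set X) : Prop :=
  forall U V : set X, mopen U -> mopen V -> A `<=` U `|` V ->
    A `&` U `&` V = set0 -> A `&` U !=set0 -> A `&` V !=set0 -> False.

Definition path_continuous (f : R -> X) (a b : R) : Prop :=
  forall t, a <= t <= b -> forall e : R, 0 < e -> exists2 del : R, 0 < del &
    forall t', a <= t' <= b -> `|t - t'| < del -> dist (f t) (f t') < e.

Definition geodesic (f : R -> X) (x y : X) : Prop :=
  [/\ f 0 = x, f (dist x y) = y &
      forall s t, 0 <= s <= dist x y -> 0 <= t <= dist x y ->
        dist (f s) (f t) = `|s - t|].

(* Real tree (Evans' definition). *)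
Definition is_real_tree : Prop :=
  [/\ is_metric,
      (forall x y, exists f, geodesic f x y),
      (forall x y f g, geodesic f x y -> geodesic g x y ->
         forall s, 0 <= s <= dist x y -> f s = g s) &
      (forall x y f q, geodesic f x y ->
         path_continuous q 0 1 ->
         {in [set t : R | 0 <= t <= 1] &, injective q} ->
         q 0 = x -> q 1 = y ->
         q @` [set t : R | 0 <= t <= 1] = f @` [set t : R | 0 <= t <= dist x y])].

Definition is_compact_real_tree : Prop := is_real_tree /\ mcompact setT.

Definition mborel : set (set X) := smallest (sigma_algebra setT) mopen.

Definition is_borel_measure (mu : set X -> \bar R) : Prop :=
  [/\ mu set0 = 0%E,
      (forall A, mborel A -> (0 <= mu A)%E) &
      (forall F : nat -> set X, (forall n, mborel (F n)) -> trivIset setT F ->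
         (fun n => \sum_(0 <= i < n) mu (F i))%E @ \oo --> mu (\bigcup_n F n))].

Definition msupport (mu : set X -> \bar R) : set X :=
  [set x | forall U, mopen U -> U x -> (0 < mu U)%E].

Definition leaves (r : X) : set X :=
  [set sigma | sigma <> r /\ mconnected (~` [set sigma])].

Definition continuum_real_tree (r : X) (mu : set X -> \bar R) : Prop :=
  [/\ is_compact_real_tree,
      is_borel_measure mu /\ (mu setT < +oo)%E,
      (forall x, mu [set x] = 0%E),
      msupport mu = setT &
      mu (~` leaves r) = 0%E].

End MetricNotions.

Section InducedTree.
Variables (R : realType) (zeta : R) (d : R -> R -> R).

Let I (s : R) := 0 <= s <= zeta.

Definition MT : Prop :=
  [/\ (forall s, I s -> d s s = 0),
      (forall s t, I s -> I t -> d s t = d t s /\ 0 <= d s t),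
      (forall s t u, I s -> I t -> I u -> d s u <= d s t + d t u),
      (forall s t, I s -> I t -> forall e : R, 0 < e -> exists2 del : R, 0 < del &
         forall s' t', I s' -> I t' -> `|s - s'| < del -> `|t - t'| < del ->
           `|d s t - d s' t'| < e) &
      (forall s1 s2 s3 s4, I s1 -> I s2 -> I s3 -> I s4 ->
         d s1 s2 + d s3 s4 <= Num.max (d s1 s3 + d s2 s4) (d s1 s4 + d s2 s3))].

Definition cls (s : R) : set R := [set t | 0 <= t <= zeta /\ d s t = 0].

(* the quotient T = [0,zeta] / {d = 0} *)
Definition Tpt : Type := {A : set R | exists2 s, 0 <= s <= zeta & A = cls s}.

Definition rep (A : Tpt) : R := s2val (cid2 (proj2_sig A)).

Definition Tdist (A B : Tpt) : R := d (rep A) (rep B).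

Definition Tproj (s : R) (h : 0 <= s <= zeta) : Tpt :=
  exist _ (cls s) (ex_intro2 _ _ s h erefl).

Lemma zero_in_interval (hz : 0 <= zeta) : (0 : R) <= 0 <= zeta.
Proof. by rewrite lexx hz. Qed.

Definition Troot (hz : 0 <= zeta) : Tpt := Tproj (zero_in_interval hz).

Definition Tmu (B : set Tpt) : \bar R :=
  lebesgue_measure [set s : R | exists h : 0 <= s <= zeta, B (Tproj h)].

End InducedTree.

From HB Require Import structures.
From mathcomp Require Import all_boot all_order all_algebra.
From mathcomp Require Import all_classical all_reals all_analysis.
From mathcomp Require Import measurable_realfun lra.
Import Order.TTheory GRing.Theory Num.Theory.
Import numFieldNormedType.Exports.
Local Open Scope classical_set_scope.
Local Open Scope ring_scope.

(* Under the four-point condition, a continuous path from x to y passes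
   through every point between x and y: split the parameter interval according
   to the Gromov product (y | q t)_x and use connectedness of segments.  This
   yields geodesics, their uniqueness, and that injective paths trace
   geodesics, so a path-connected four-point space is a real tree.  The
   quotient T is a continuous image of [0, zeta], hence such a space, and it is
   compact; mu charges every open set.  For s in U, p(s) lies on no geodesic
   from the root to another point, so p(s) is a leaf and p^-1(p(s)) = {s}; as
   [0, zeta] \ U is negligible, mu has no atoms and is carried by the leaves. *)

Section SegmentConnected.
Variable R : realType.
Local Set Implicit Arguments.
Local Unset Strict Implicit.
Implicit Types (a b : R) (P Q : R -> Prop).

Definition near_in a b P : set R :=
  [set t | exists2 e : R, 0 < e & forall t', a <= t' <= b -> `|t - t'| < e -> P t'].

Definition open_in_segment a b P := forall t, a <= t <= b -> P t -> near_in a b P t.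

Lemma open_near_in a b P : open (near_in a b P).
Proof.
rewrite openE => t [e e0 He]; apply/nbhs_ballP; exists (e / 2) => /=; first lra.
move=> u; rewrite /ball /= => tu; exists (e / 2) => [|t' It' ut']; first lra.
by apply: He => //; have := ler_distD u t t'; lra.
Qed.

Lemma near_in_segmentE a b P t : open_in_segment a b P -> a <= t <= b ->
  near_in a b P t <-> P t.
Proof.
move=> oP It; split=> [[e e0 /(_ t It)]|/(oP t It)//].
by rewrite subrr normr0; apply.
Qed.

Lemma segment_open_cover_meet a b P Q : a <= b -> P a -> Q b ->
  (forall t, a <= t <= b -> P t \/ Q t) ->
  open_in_segment a b P -> open_in_segment a b Q ->
  exists t, [/\ a <= t <= b, P t & Q t].
Proof.
move=> ab Pa Qb cover oP oQ; apply: contrapT => disj.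
have Ia : a <= a <= b by rewrite lexx ab.
have Ib : a <= b <= b by rewrite lexx ab.
(* on [a, b], [near_in a b P] is open and, as the complement of
   [near_in a b Q], also closed *)
have splitB : [set` `[a, b]] `&` near_in a b P = [set` `[a, b]].
  apply: segment_connected.
  - by exists a; split; [rewrite /= in_itv | exact: oP].
  - by exists (near_in a b P) => //; exact: open_near_in.
  exists (~` near_in a b Q); first exact/open_closedC/open_near_in.
  apply/seteqP; split=> t [/[dup] + It]; rewrite /= in_itv /= => It'.
    move=> /(near_in_segmentE oP It') Pt; split=> // /(near_in_segmentE oQ It') Qt.
    by apply: disj; exists t.
  move=> nQ; split=> //; apply/(near_in_segmentE oP It').
  by case: (cover t It') => // Qt; exfalso; apply/nQ/(near_in_segmentE oQ It').
have : ([set` `[a, b]] `&` near_in a b P) b by rewrite splitB /= in_itv.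
by move=> [_ /(near_in_segmentE oP Ib) Pb]; apply: disj; exists b.
Qed.

End SegmentConnected.

Section FourPointSpace.
Variables (R : realType) (X : Type) (dist : X -> X -> R).
Hypothesis dist_metric : is_metric dist.
Hypothesis four_point : forall x y z w,
  dist x y + dist z w <= dist x z + dist y w \/
  dist x y + dist z w <= dist x w + dist y z.
Local Set Implicit Arguments.
Local Unset Strict Implicit.

Lemma dist_ge0 x y : 0 <= dist x y.
Proof. by case: dist_metric. Qed.
Lemma dist_refl x : dist x x = 0.
Proof. by case: dist_metric => _ /(_ x x) [_ ->]. Qed.
Lemma dist_eq0 x y : dist x y = 0 -> x = y.
Proof. by case: dist_metric => _ /(_ x y) []. Qed.
Lemma distC x y : dist x y = dist y x.
Proof. by case: dist_metric. Qed.
Lemma dist_triangle x y z : dist x z <= dist x y + dist y z.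
Proof. by case: dist_metric. Qed.

Definition between x y w := dist x w + dist w y = dist x y.

Lemma between_uniq x y w w' : between x y w ->
  dist x w' = dist x w -> dist w' y = dist w y -> w = w'.
Proof.
rewrite /between => xwy xw wy; apply: dist_eq0.
have := dist_ge0 w w'; have := distC w x; have := distC w' x.
by case: (four_point w w' x y); lra.
Qed.

Lemma between_dist x y w1 w2 : between x y w1 -> between x y w2 ->
  dist x w1 <= dist x w2 -> dist w1 w2 = dist x w2 - dist x w1.
Proof.
rewrite /between => xw1y xw2y le12; have := dist_triangle x w1 w2.
have := distC w1 x; have := distC w2 x.
by case: (four_point w1 w2 x y); lra.
Qed.

(* twice the Gromov product (y | z)_x *)
Definition gromov x y z := dist x z + dist x y - dist z y.

Lemma gromov_lipschitz x y z z' : gromov x y z' <= gromov x y z + 2 * dist z z'.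
Proof.
by rewrite /gromov; have := dist_triangle x z z'; have := dist_triangle z z' y; lra.
Qed.

Lemma gromov_stable x y z z' h : 2 * h <= gromov x y z ->
  dist z z' < dist x z - h -> 2 * h <= gromov x y z'.
Proof.
rewrite /gromov => hz zz'; have := dist_triangle x z' z.
have := distC z' x; have := distC z y; have := distC z' z; have := distC y x.
by case: (four_point z' y x z); lra.
Qed.

Lemma dist_branch_point x y z w : between x y w -> 2 * dist x w = gromov x y z ->
  dist w z = dist x z - dist x w.
Proof.
rewrite /between /gromov => xwy hw; have := dist_triangle x w z.
have := distC w x; have := distC z x.
by case: (four_point w z x y); lra.
Qed.

Definition path_joined x y := exists q a b,
  [/\ a <= b, path_continuous dist q a b, q a = x & q b = y].

Lemma path_continuous_sub q a b a' b' : a <= a' -> b' <= b ->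
  path_continuous dist q a b -> path_continuous dist q a' b'.
Proof.
move=> aa' b'b qc t /andP[ta' tb'] e e0.
have [del del0 H] := qc t ltac:(apply/andP; split; lra) e e0.
by exists del => // t' /andP[? ?] ?; apply: H => //; apply/andP; split; lra.
Qed.

Lemma path_joined_sym x y : path_joined x y -> path_joined y x.
Proof.
move=> [q [a [b [ab qc qa qb]]]]; exists (fun t => q (a + b - t)), a, b.
split=> //; last by rewrite addrK.
  move=> t /andP[ta tb] e e0.
  have [del del0 Hdel] := qc (a + b - t) ltac:(apply/andP; split; lra) e e0.
  exists del => // t' /andP[t'a t'b] tt'; apply: Hdel; first by apply/andP; split; lra.
  have -> : a + b - t - (a + b - t') = t' - t by lra.
  by rewrite distrC.
by rewrite addrAC subrr add0r.
Qed.

(* The part of [a, b] where (y | q t)_x >= h is relatively open by the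
   four-point condition, unless some q t is the wanted point. *)
Lemma path_hits_between q a b x y h : a <= b -> path_continuous dist q a b ->
  q a = x -> q b = y -> 0 <= h <= dist x y ->
  exists t, [/\ a <= t <= b, dist x (q t) = h & dist (q t) y = dist x y - h].
Proof.
move=> ab qc qa qb /andP[h0 hD]; apply: contrapT => nohit.
have [h_eq0|h_neq0] := eqVneq h 0.
  by apply: nohit; exists a; rewrite lexx ab qa dist_refl h_eq0 subr0.
have h_gt0 : 0 < h by rewrite lt_neqAle eq_sym h_neq0 h0.
have far t : a <= t <= b -> 2 * h <= gromov x y (q t) -> h < dist x (q t).
  rewrite /gromov => It gh; rewrite ltNge; apply/negP => le_h.
  have tri := dist_triangle x (q t) y.
  have [? ?] : dist x (q t) = h /\ dist (q t) y = dist x y - h by lra.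
  by apply: nohit; exists t.
have [t [_ lt_h ge_h]] : exists t, [/\ a <= t <= b,
    gromov x y (q t) < 2 * h & 2 * h <= gromov x y (q t)].
  apply: segment_open_cover_meet => //.
  - by rewrite /gromov qa dist_refl; lra.
  - by rewrite /gromov qb dist_refl; lra.
  - by move=> t _; case: (ltP (gromov x y (q t)) (2 * h)); [left | right].
  - move=> t It lt_h.
    have [del del0 Hdel] := qc t It ((2 * h - gromov x y (q t)) / 2) ltac:(lra).
    exists del => // t' It' tt'; have := Hdel t' It' tt'.
    by have := gromov_lipschitz x y (q t) (q t'); lra.
  - move=> t It ge_h; have := far t It ge_h => far_t.
    have [del del0 Hdel] := qc t It (dist x (q t) - h) ltac:(lra).
    by exists del => // t' It' tt'; exact: gromov_stable ge_h (Hdel t' It' tt').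
lra.
Qed.

Lemma geodesic_dist f x y s : geodesic dist f x y -> 0 <= s <= dist x y ->
  dist x (f s) = s /\ dist (f s) y = dist x y - s.
Proof.
case=> f0 fD fd /andP[s0 sD].
have I0 : (0 : R) <= 0 <= dist x y by rewrite lexx dist_ge0.
have ID : 0 <= dist x y <= dist x y by rewrite lexx dist_ge0.
have Is : 0 <= s <= dist x y by rewrite s0 sD.
split; first by rewrite -{1}f0 fd // sub0r normrN ger0_norm.
by rewrite -{1}fD fd // ler0_norm ?opprB // subr_le0.
Qed.

Lemma geodesic_exists x y : path_joined x y -> exists f, geodesic dist f x y.
Proof.
move=> [q [a [b [ab qc qa qb]]]].
have /choice [f Hf] : forall s, exists w, 0 <= s <= dist x y ->
    dist x w = s /\ dist w y = dist x y - s.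
  move=> s.
  have [Is|nIs] := pselect (0 <= s <= dist x y); last by exists x.
  by have [t [_ <- <-]] := path_hits_between ab qc qa qb Is; exists (q t).
have I0 : (0 : R) <= 0 <= dist x y by rewrite lexx dist_ge0.
have ID : 0 <= dist x y <= dist x y by rewrite lexx dist_ge0.
exists f; split.
- by apply/esym/dist_eq0; have [] := Hf 0 I0.
- by apply: dist_eq0; have [_ ->] := Hf _ ID; rewrite subrr.
- move=> s t Is It; have [xs sy] := Hf s Is; have [xt ty] := Hf t It.
  wlog st : s t Is It xs sy xt ty / s <= t.
    move=> wlog_st; have [/wlog_st|/ltW ts] := leP s t; first exact.
    by rewrite distC distrC; exact: wlog_st.
  have bs : between x y (f s) by rewrite /between xs sy; lra.
  have bt : between x y (f t) by rewrite /between xt ty; lra.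
  by rewrite (between_dist bs bt) xs xt // ler0_norm ?opprB // subr_le0.
Qed.

Lemma geodesic_between_image f x y w : geodesic dist f x y -> between x y w ->
  0 <= dist x w <= dist x y /\ w = f (dist x w).
Proof.
rewrite /between => gf xwy.
have Iw : 0 <= dist x w <= dist x y by rewrite dist_ge0 /=; have := dist_ge0 w y; lra.
split=> //; have [xf fy] := geodesic_dist gf Iw.
by apply: (@between_uniq x y) => //; lra.
Qed.

Section InjectivePath.
Variables (q : R -> X) (x y : X).
Hypotheses (qc : path_continuous dist q 0 1)
  (qinj : {in [set t : R | 0 <= t <= 1] &, injective q})
  (q0 : q 0 = x) (q1 : q 1 = y).

(* If z = q t were off [x, y], the branch point w of z on [x, y] would be
   visited by q both before and after t, so injectivity would force w = z. *)
Lemma injective_path_between t : 0 <= t <= 1 -> between x y (q t).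
Proof.
move=> /[dup] It /andP[t_ge0 t_le1].
have [z qtz] : exists z, q t = z by exists (q t).
rewrite qtz; apply: contrapT => not_between.
have [f gf] : exists f, geodesic dist f x y.
  by apply: geodesic_exists; exists q, 0, 1; rewrite ler01.
have [h hE] : exists h, 2 * h = gromov x y z by exists (gromov x y z / 2); lra.
move: hE; rewrite /gromov => hE.
have tri_xzy := dist_triangle x z y; have tri_zxy := dist_triangle z x y.
have tri_xyz := dist_triangle x y z.
have zx := distC z x; have yz := distC y z.
have strict : dist x y < dist x z + dist z y.
  by rewrite lt_neqAle tri_xzy andbT; apply/eqP => /esym.
have Ih : 0 <= h <= dist x y by apply/andP; split; lra.
have [xw wy] := geodesic_dist gf Ih.
have bw : between x y (f h) by rewrite /between xw wy; lra.
have wz : dist (f h) z = dist x z - h.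
  by rewrite (dist_branch_point bw) xw // /gromov; lra.
have Ih1 : 0 <= h <= dist x z by apply/andP; split; lra.
have [t1 [It1 xt1 t1z]] :=
  path_hits_between t_ge0 (path_continuous_sub (lexx 0) t_le1 qc) q0 qtz Ih1.
have Ih2 : 0 <= dist x z - h <= dist z y by apply/andP; split; lra.
have [t2 [It2 zt2 t2y]] :=
  path_hits_between t_le1 (path_continuous_sub t_ge0 (lexx 1) qc) qtz q1 Ih2.
have w_t1 : f h = q t1.
  by apply: (@between_uniq x z); rewrite /between ?xt1 ?t1z; lra.
have w_t2 : f h = q t2.
  by apply: (@between_uniq z y); rewrite /between; have := distC z (f h); lra.
have t12 : t1 = t2.
  apply: qinj; rewrite ?inE /= -?w_t1 -?w_t2 //.
    by case/andP: It1 => ? ?; apply/andP; split; lra.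
  by case/andP: It2 => ? ?; apply/andP; split; lra.
have t1t : t1 = t by case/andP: It1 => _ ?; case/andP: It2 => ? _; lra.
by move: wz; rewrite w_t1 t1t qtz dist_refl; lra.
Qed.

Lemma injective_path_image f : geodesic dist f x y ->
  q @` [set t : R | 0 <= t <= 1] = f @` [set t : R | 0 <= t <= dist x y].
Proof.
move=> gf; apply/seteqP; split=> _ [t It <-].
- have [Iw ->] := geodesic_between_image gf (injective_path_between It).
  by exists (dist x (q t)).
- have [t' [It' xt' t'y]] := path_hits_between ler01 qc q0 q1 It.
  exists t' => //; have [xf fy] := geodesic_dist gf It.
  by apply: (@between_uniq x y); rewrite /between ?xf ?fy; lra.
Qed.

End InjectivePath.

Lemma real_tree_of_path_joined : (forall x y, path_joined x y) -> is_real_tree dist.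
Proof.
move=> joined; split=> //.
- by move=> x y; exact: geodesic_exists.
- move=> x y f g gf gg s Is.
  have [xf fy] := geodesic_dist gf Is; have [xg gy] := geodesic_dist gg Is.
  by apply: (@between_uniq x y); rewrite /between ?xf ?fy ?xg ?gy; lra.
- by move=> x y f q gf qc qinj q0 q1; exact: injective_path_image.
Qed.

Lemma geodesic_open_cover_meet f x y (U V : set X) : geodesic dist f x y ->
  mopen dist U -> mopen dist V ->
  (forall s, 0 <= s <= dist x y -> U (f s) \/ V (f s)) -> U x -> V y ->
  exists s, [/\ 0 <= s <= dist x y, U (f s) & V (f s)].
Proof.
case=> f0 fD fd oU oV cover Ux Vy.
apply: segment_open_cover_meet; rewrite ?f0 ?fD ?dist_ge0 //.
- move=> s Is Us; have [e e0 ball_U] := oU _ Us.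
  by exists e => // s' Is' ss'; apply: ball_U; rewrite /mball /= fd.
- move=> s Is Vs; have [e e0 ball_V] := oV _ Vs.
  by exists e => // s' Is' ss'; apply: ball_V; rewrite /mball /= fd.
Qed.

Lemma mconnected_setC1 r c : r <> c ->
  (forall z, z <> c -> dist r z < dist r c + dist c z) ->
  (forall x y, exists f, geodesic dist f x y) -> mconnected dist (~` [set c]).
Proof.
move=> r_c off_c geo U V oU oV cover UV0 [u [u_c Uu]] [v [v_c Vv]].
have disj w : w <> c -> U w -> V w -> False.
  by move=> w_c Uw Vw; have : (~` [set c] `&` U `&` V) w by []; rewrite UV0.
have side_of_r (A B : set X) : mopen dist A -> mopen dist B ->
    (forall w, w <> c -> A w \/ B w) -> (forall w, w <> c -> A w -> B w -> False) ->
    A r -> forall z, z <> c -> ~ B z.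
  move=> oA oB coverAB disjAB Ar z z_c Bz; have [f gf] := geo r z.
  have f_c s : 0 <= s <= dist r z -> f s <> c.
    move=> Is fs_c; have [rs sz] := geodesic_dist gf Is.
    by have := off_c z z_c; rewrite -fs_c; lra.
  have [s [Is As Bs]] := geodesic_open_cover_meet gf oA oB
    (fun s Is => coverAB _ (f_c s Is)) Ar Bz.
  exact: disjAB (f_c s Is) As Bs.
have [Ur|Vr] := cover r r_c.
- exact: side_of_r U V oU oV cover disj Ur v v_c Vv.
- apply: (side_of_r V U oV oU _ _ Vr u u_c Uu).
    by move=> w /cover []; [right | left].
  by move=> w w_c Vw Uw; exact: disj w_c Uw Vw.
Qed.

End FourPointSpace.

Lemma le_lebesgue_measure {R : realType} {A B : set R} : A `<=` B ->
  (lebesgue_measure A <= lebesgue_measure B)%E.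
Proof. by move=> AB; exact: le_mu_ext. Qed.

Section InducedTree.
Variables (R : realType) (zeta : R) (d : R -> R -> R).
Hypotheses (zeta_gt0 : 0 < zeta) (dMT : MT zeta d).
Local Set Implicit Arguments.
Local Unset Strict Implicit.

Local Notation I s := (0 <= s <= zeta).
Local Notation T := (Tpt zeta d).
Local Notation Tdist := (@Tdist R zeta d).
Local Notation Tmu := (@Tmu R zeta d).

Lemma d_refl s : I s -> d s s = 0.
Proof. by case: dMT => + _ _ _ _; apply. Qed.
Lemma dC s t : I s -> I t -> d s t = d t s.
Proof. by move=> Is It; case: dMT => _ /(_ s t Is It) []. Qed.
Lemma d_ge0 s t : I s -> I t -> 0 <= d s t.
Proof. by move=> Is It; case: dMT => _ /(_ s t Is It) []. Qed.
Lemma d_triangle s t u : I s -> I t -> I u -> d s u <= d s t + d t u.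
Proof. by case: dMT => _ _ + _ _; apply. Qed.

(* [Tproj] made total: points outside [0, zeta] are sent to the root *)
Definition tproj (s : R) : T :=
  match pselect (I s) with
  | left Is => Tproj d Is
  | right _ => Tproj d (zero_in_interval (ltW zeta_gt0))
  end.

Lemma tprojE s (Is : I s) : tproj s = Tproj d Is.
Proof.
rewrite /tproj; case: pselect => [Is'|/(_ Is)//].
by rewrite (Prop_irrelevance Is Is').
Qed.

Lemma repP (A : T) : I (rep A) /\ proj1_sig A = cls zeta d (rep A).
Proof. exact: (conj (s2valP (cid2 (proj2_sig A))) (s2valP' (cid2 (proj2_sig A)))). Qed.

Lemma rep_in_interval (A : T) : I (rep A).
Proof. exact: (repP A).1. Qed.

Lemma tproj_rep A : tproj (rep A) = A.
Proof.
have [IA AE] := repP A; rewrite (tprojE IA).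
by case: A IA AE => S pS IA /= AE; apply: eq_exist; apply: esym.
Qed.

Lemma cls_eq s t : I s -> I t -> d s t = 0 -> cls zeta d s = cls zeta d t.
Proof.
move=> Is It st; apply/seteqP; split=> u [Iu su]; split=> //.
- by have := d_triangle It Is Iu; have := d_ge0 It Iu; rewrite (dC It Is); lra.
- by have := d_triangle Is It Iu; have := d_ge0 Is Iu; lra.
Qed.

Lemma rep_tproj s : I s -> d s (rep (tproj s)) = 0.
Proof.
move=> Is; have [Ir rE] := repP (tproj s); move: rE; rewrite {1}(tprojE Is) /= => rE.
have : cls zeta d (rep (tproj s)) (rep (tproj s)) by split=> //; exact: d_refl.
by rewrite -rE => -[].
Qed.

Lemma Tdist_tproj s t : I s -> I t -> Tdist (tproj s) (tproj t) = d s t.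
Proof.
move=> Is It; have Is' := rep_in_interval (tproj s).
have It' := rep_in_interval (tproj t).
have := rep_tproj Is; have := rep_tproj It; rewrite /Tdist.
have := d_triangle Is' Is It'; have := d_triangle Is It It'; have := d_triangle Is Is' It.
have := d_triangle Is' It' It; have := dC Is' Is; have := dC It' It; lra.
Qed.

Lemma tproj_eqP s t : I s -> I t -> tproj s = tproj t <-> d s t = 0.
Proof.
move=> Is It; split=> [st|st0].
  by rewrite -Tdist_tproj // st Tdist_tproj // d_refl.
by rewrite (tprojE Is) (tprojE It); apply: eq_exist; exact: cls_eq.
Qed.

Lemma Tdist_metric : is_metric Tdist.
Proof.
have IA := rep_in_interval; rewrite /Tdist; split.
- by move=> A B; apply: d_ge0.
- move=> A B; split=> [AB0|->]; last exact: d_refl.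
  by rewrite -(tproj_rep A) -(tproj_rep B); apply/tproj_eqP.
- by move=> A B; apply: dC.
- by move=> A B C; apply: d_triangle.
Qed.

Lemma Tdist_four_point (x y z w : T) :
  Tdist x y + Tdist z w <= Tdist x z + Tdist y w \/
  Tdist x y + Tdist z w <= Tdist x w + Tdist y z.
Proof.
have IA := rep_in_interval; case: dMT => _ _ _ _ /(_ _ _ _ _ (IA x) (IA y) (IA z) (IA w)).
by rewrite /Tdist le_max => /orP[]; [left | right].
Qed.

Lemma tproj_continuous : path_continuous Tdist tproj 0 zeta.
Proof.
move=> s Is e e0; case: dMT => _ _ _ /(_ s s Is Is e e0) [del del0 Hdel] _.
exists del => // t It st; rewrite Tdist_tproj //.
have := Hdel s t Is It; rewrite subrr normr0 d_refl // sub0r normrN => /(_ del0 st).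
exact: le_lt_trans (ler_norm _).
Qed.

Lemma Tpt_path_joined (A B : T) : path_joined Tdist A B.
Proof.
wlog AB : A B / rep A <= rep B.
  move=> wlog_AB; have [/wlog_AB //|/ltW/wlog_AB] := leP (rep A) (rep B).
  exact: path_joined_sym.
exists tproj, (rep A), (rep B); split; rewrite ?tproj_rep //.
have /andP[A0 _] := rep_in_interval A; have /andP[_ Bz] := rep_in_interval B.
exact: path_continuous_sub A0 Bz tproj_continuous.
Qed.

Lemma Tdist_real_tree : is_real_tree Tdist.
Proof.
exact: (real_tree_of_path_joined Tdist_metric Tdist_four_point Tpt_path_joined).
Qed.

Lemma open_in_segment_tproj (P : set T) : mopen Tdist P ->
  open_in_segment 0 zeta (fun t => P (tproj t)).
Proof.
move=> oP t It Pt; have [e e0 ball_P] := oP _ Pt.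
have [del del0 Hdel] := tproj_continuous It e0.
by exists del => // t' It' tt'; apply: ball_P; exact: Hdel.
Qed.

Lemma Tpt_compact : mcompact Tdist setT.
Proof.
move=> J U oU cover.
have /choice [i Ui] : forall s, exists i, U i (tproj s).
  by move=> s; have [i _ Ui] := cover (tproj s) Logic.I; exists i.
pose V s := near_in 0 zeta (fun t => U (i s) (tproj t)).
have cover_V : [set` `[0, zeta]] `<=` \bigcup_s V s.
  move=> t; rewrite /= in_itv /= => It; exists t => //.
  exact: open_in_segment_tproj.
have := @segment_compact R 0 zeta; rewrite compact_cover => /(_ R setT V).
case/(_ (fun s _ => @open_near_in R 0 zeta _) cover_V) => D _ subD.
exists (size (finmap.enum_fset D)), (fun k => i (nth 0 (finmap.enum_fset D) k)).
move=> A _; have IA := rep_in_interval A.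
have [s Ds VsA] := subD (rep A) ltac:(by rewrite /= in_itv).
have := (near_in_segmentE (open_in_segment_tproj (oU (i s))) IA).1 VsA.
rewrite tproj_rep => UA.
by exists (index s (finmap.enum_fset D)); rewrite ?index_mem ?nth_index.
Qed.

Definition tproj_preim (B : set T) : set R := [set s | I s /\ B (tproj s)].

Lemma TmuE B : Tmu B = lebesgue_measure (tproj_preim B).
Proof.
rewrite /Tmu; congr lebesgue_measure; apply/seteqP; split=> s /=.
- by case=> Is Bs; split=> //; rewrite (tprojE Is).
- by case=> Is Bs; exists Is; rewrite -(tprojE Is).
Qed.

Lemma measurable_tproj_preim_open B : mopen Tdist B -> measurable (tproj_preim B).
Proof.
move=> oB; have oB' := open_in_segment_tproj oB.
have -> : tproj_preim B = [set` `[0, zeta]] `&` near_in 0 zeta (fun t => B (tproj t)).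
  apply/seteqP; split=> s; rewrite /= in_itv /=.
  - by case=> Is Bs; split=> //; exact/(near_in_segmentE oB').
  - by case=> Is Bs; split=> //; exact/(near_in_segmentE oB').
apply: measurableI; first exact: measurable_itv.
by apply: open_measurable; exact: open_near_in.
Qed.

Lemma measurable_tproj_preim B : mborel Tdist B -> measurable (tproj_preim B).
Proof.
move=> borelB; apply: (borelB [set B | measurable (tproj_preim B)]).
split; last by move=> A; exact: measurable_tproj_preim_open.
split=> /=.
- by rewrite (_ : tproj_preim set0 = set0) //; apply/seteqP; split=> s // [].
- move=> A mA; rewrite (_ : tproj_preim _ = [set` `[0, zeta]] `\` tproj_preim A).
    exact/measurableD.
  apply/seteqP; split=> s /=; rewrite in_itv /=.
  + by case=> Is [_ nAs]; split=> // -[].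
  + by case=> Is nAs; split=> //; split=> // As; apply: nAs.
- move=> A mA; rewrite (_ : tproj_preim _ = \bigcup_k tproj_preim (A k)).
    exact: bigcupT_measurable.
  apply/seteqP; split=> s /=.
  + by case=> Is [k _ Aks]; exists k.
  + by case=> k _ [Is Aks]; split=> //; exists k.
Qed.

Lemma Tmu_borel : is_borel_measure Tdist Tmu.
Proof.
split.
- by rewrite TmuE (_ : tproj_preim set0 = set0) //; apply/seteqP; split=> s // [].
- by move=> A _; rewrite TmuE; exact: measure_ge0.
- move=> F borelF trivF; rewrite TmuE.
  rewrite (_ : tproj_preim _ = \bigcup_n tproj_preim (F n)); last first.
    apply/seteqP; split=> s /=.
    + by case=> Is [k _ Fks]; exists k.
    + by case=> k _ [Is Fks]; split=> //; exists k.
  under eq_fun do under eq_bigr do rewrite TmuE.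
  apply: measure_sigma_additive => [n|i j _ _ [s [[_ Fis] [_ Fjs]]]].
    exact: measurable_tproj_preim.
  by apply: (trivF i j) => //; exists (tproj s).
Qed.

Lemma Tmu_finite : (Tmu setT < +oo)%E.
Proof.
rewrite TmuE (_ : tproj_preim setT = [set` `[0, zeta]]).
  by rewrite lebesgue_measure_itv /= lte_fin zeta_gt0 -EFinD ltry.
by apply/seteqP; split=> s /=; rewrite in_itv /=; [case | split].
Qed.

Lemma Tmu_support : msupport Tdist Tmu = setT.
Proof.
apply/seteqP; split=> // A _ V oV VA; rewrite TmuE.
have IA := rep_in_interval A; have /andP[A0 Az] := IA.
have VA' : V (tproj (rep A)) by rewrite tproj_rep.
have [del del0 ball_V] := open_in_segment_tproj oV IA VA'.
pose lo := Num.max 0 (rep A - del); pose hi := Num.min zeta (rep A + del).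
have lo_hi : lo < hi.
  by rewrite /lo /hi gt_max !lt_min zeta_gt0 /=; apply/and3P; split; lra.
have sub : [set` `]lo, hi[] `<=` tproj_preim V.
  move=> t; rewrite /= in_itv /= /lo /hi gt_max lt_min => /andP[/andP[? ?] /andP[? ?]].
  have It : I t by apply/andP; split; lra.
  by split=> //; apply: ball_V => //; rewrite ltr_norml; apply/andP; split; lra.
apply: lt_le_trans (le_lebesgue_measure sub).
by rewrite lebesgue_measure_itv /= lte_fin lo_hi -EFinD lte_fin subr_gt0.
Qed.

Lemma Troot_tproj : Troot d (ltW zeta_gt0) = tproj 0.
Proof. by rewrite (tprojE (zero_in_interval (ltW zeta_gt0))). Qed.

Lemma Tmu_eq0 B : lebesgue_measure.-negligible (tproj_preim B) -> Tmu B = 0%E.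
Proof.
move=> [N [_ N0 sub]]; apply/eqP; rewrite TmuE eq_le measure_ge0 andbT -N0.
exact: le_lebesgue_measure.
Qed.

Definition leaf_times : set R := [set s | 0 < s < zeta /\
  forall s', I s' -> s' <> s -> d 0 s + d s s' > d 0 s'].

Lemma leaf_times_in_interval s : leaf_times s -> I s.
Proof. by move=> [/andP[s0 sz] _]; rewrite !ltW. Qed.

Lemma leaf_times_d0 s t : leaf_times s -> leaf_times t -> d s t = 0 -> s = t.
Proof.
move=> /[dup] /leaf_times_in_interval Is [_ Hs].
move=> /[dup] /leaf_times_in_interval It [_ Ht] st.
apply: contrapT => s_neq_t; have := Hs t It (nesym s_neq_t); have := Ht s Is s_neq_t.
by rewrite (dC It Is) st; lra.
Qed.

Lemma tproj_leaf s : leaf_times s -> leaves Tdist (tproj 0) (tproj s).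
Proof.
move=> /[dup] /leaf_times_in_interval Is [/andP[s0 _] Hs].
have I0 : I (0 : R) by rewrite lexx ltW.
have s_neq0 : 0 <> s by move=> s_eq0; rewrite -s_eq0 ltxx in s0.
have d0s : 0 < d 0 s.
  by have := Hs 0 I0 s_neq0; rewrite d_refl // (dC Is I0); lra.
have root_neq : tproj 0 <> tproj s by move/(tproj_eqP I0 Is); lra.
split; first exact: nesym.
apply: (mconnected_setC1 Tdist_metric root_neq).
- move=> z; rewrite -(tproj_rep z) => z_neq.
  have Iz := rep_in_interval z; rewrite !Tdist_tproj //.
  by apply: Hs => // z_eq; apply: z_neq; rewrite z_eq.
- by case: Tdist_real_tree.
Qed.

Section NegligibleBranchTimes.
Hypothesis negl : lebesgue_measure.-negligible ([set s | I s] `\` leaf_times).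

Lemma Tmu_set1 x : Tmu [set x] = 0%E.
Proof.
apply: Tmu_eq0.
have [[u [[Iu xu] Uu]]|none] := pselect (exists u, tproj_preim [set x] u /\ leaf_times u).
- have negl_u : lebesgue_measure.-negligible [set u].
    by exists [set u]; split; [exact: measurable_set1 | exact: lebesgue_measure_set1 |].
  apply: negligibleS (negligibleU negl negl_u) => s [Is xs].
  have [Us|nUs] := pselect (leaf_times s); last by left.
  by right; apply: leaf_times_d0 Us Uu _; apply/(tproj_eqP Is Iu); rewrite xs xu.
- by apply: negligibleS negl => s [Is xs]; split=> // Us; apply: none; exists s.
Qed.

Lemma Tmu_nonleaves : Tmu (~` leaves Tdist (tproj 0)) = 0%E.
Proof.
by apply/Tmu_eq0/(negligibleS _ negl) => s [Is nleaf]; split=> // /tproj_leaf.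
Qed.

End NegligibleBranchTimes.

End InducedTree.

Theorem lemma4p8 (R : realType) (zeta : R) (hz : 0 < zeta) (d : R -> R -> R)
  (hd : MT zeta d) :
  let U := [set s : R | 0 < s < zeta /\
              forall s', 0 <= s' <= zeta -> s' <> s -> d 0 s + d s s' > d 0 s'] in
  (@lebesgue_measure R).-negligible ([set s : R | 0 <= s <= zeta] `\` U) ->
  continuum_real_tree (@Tdist R zeta d) (Troot d (ltW hz)) (@Tmu R zeta d).
Proof.
move=> U negl; split.
- by split; [exact: Tdist_real_tree | exact: Tpt_compact].
- by split; [exact: Tmu_borel | exact: Tmu_finite].
- exact: Tmu_set1 negl.
- exact: Tmu_support.
- by rewrite Troot_tproj; exact: Tmu_nonleaves negl.
Qed.
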